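(* Let $m\ge2$ and $a,b\in(0,1/m)$. Then $\Sigma_{HC}$ is the natural extension of $\Sigma^+_{HC}$, i.e. $$\Sigma_{HC}=\{\omega\in\{1,\ldots,2m\}^{\mathbb Z}: (\omega_{n-k})_{n\in\mathbb Z^+}\in\Sigma_{HC}^+\text{ for every } k\ge1\}.$$
   Context: $F_a(x)=\frac{x-(i-1)a}{a}$ on $[(i-1)a,ia)$, $i\in\{1,\ldots,m\}$, $F_a(x)=\frac{x-ma}{1-ma}$ on $[ma,1]$. $\Omega_i^+=[(i-1)a,ia)\times[0,1]$ for $i\le m$; $\Omega_i^+=[ma,1]\times[\frac{i-m-1}{m},\frac{i-m}{m})$ for $m+1\le i\le2m-1$; $\Omega_{2m}^+=[ma,1]\times[\frac{m-1}{m},1]$. $f_a(x,y)=(F_a(x),\frac{y}{m}+\frac{i-1}{m})$ on $\Omega_i^+$ for $i\le m$, $f_a(x,y)=(F_a(x),my-i+m+1)$ on $\Omega_i^+$ for $i\ge m+1$. $\Omega_i=\Omega_i^+\times[0,1]$, $f_{a,b}(x,y,z)=(f_a(x,y),(1-mb)z)$ on $\Omega_i$ for $i\le m$, $f_{a,b}(x,y,z)=(f_a(x,y),bz+1-mb+b(i-m-1))$ on $\Omega_i$ for $i\ge m+1$ (a bijection of $[0,1]^3$). $X_a=\bigcap_{n\ge0}f_a^{-n}(\bigcup_i\mathrm{int}\,\Omega_i^+)$, $X_{a,b}=\bigcap_{n\in\mathbb Z}f_{a,b}^{-n}(\bigcup_i\mathrm{int}\,\Omega_i)$; $\pi_a(p)=(\omega_n)_{n\ge0}$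 with $f_a^n(p)\in\mathrm{int}\,\Omega^+_{\omega_n}$, $\pi_{a,b}(p)=(\omega_n)_{n\in\mathbb Z}$ with $f_{a,b}^n(p)\in\mathrm{int}\,\Omega_{\omega_n}$. $\Sigma_{HC}^+=\mathrm{cl}(\pi_a(X_a))$, $\Sigma_{HC}=\mathrm{cl}(\pi_{a,b}(X_{a,b}))$ (closures in product topologies). *)

From Stdlib Require Import Reals Lra Lia ZArith Arith.
Open Scope R_scope.

Definition floorR (r : R) : Z := Int_part r.

(* F_a : [0,1] -> [0,1]. On [(i-1)a, ia) (i <= m), (x-(i-1)a)/a, with
   i-1 = floor(x/a); on [ma,1], (x-ma)/(1-ma). *)
Definition Fa (m : nat) (a x : R) : R :=
  if Rlt_dec x (INR m * a)
  then (x - IZR (floorR (x / a)) * a) / a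
  else (x - INR m * a) / (1 - INR m * a).

(* index i in {1..2m} of the half-open piece Omega_i^+ containing (x,y) in [0,1]^2 *)
Definition idx (m : nat) (a x y : R) : nat :=
  if Rlt_dec x (INR m * a)
  then S (Z.to_nat (floorR (x / a)))
  else Nat.min (2 * m) (m + 1 + Z.to_nat (floorR (INR m * y))).

Definition fa (m : nat) (a : R) (p : R * R) : R * R :=
  let (x, y) := p in
  let i := idx m a x y in
  (Fa m a x,
   if Nat.leb i m then y / INR m + (INR i - 1) / INR m
   else INR m * y - INR i + INR m + 1).

Definition fab (m : nat) (a b : R) (p : R * R * R) : R * R * R :=
  let '(x, y, z) := p in
  let i := idx m a x y in
  (fa m a (x, y),
   if Nat.leb i m then (1 - INR m * b) * z
   else b * z + 1 - INR m * b + b * (INR i - INR m - 1)).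

Definition intOmegaPlus (m : nat) (a : R) (i : nat) (p : R * R) : Prop :=
  let (x, y) := p in
  if Nat.leb i m then
    (1 <= i)%nat /\ (INR i - 1) * a < x < INR i * a /\ 0 < y < 1
  else
    (i <= 2 * m)%nat /\ INR m * a < x < 1 /\
    (INR i - INR m - 1) / INR m < y < (INR i - INR m) / INR m.

Definition intOmega (m : nat) (a : R) (i : nat) (p : R * R * R) : Prop :=
  let '(x, y, z) := p in intOmegaPlus m a i (x, y) /\ 0 < z < 1.

(* pi_a(X_a): codings of points whose whole forward orbit stays in the
   union of the interiors int Omega_i^+ *)
Definition piXa (m : nat) (a : R) (w : nat -> nat) : Prop :=
  exists p : R * R, forall n : nat, intOmegaPlus m a (w n) (Nat.iter n (fa m a) p).

(* pi_{a,b}(X_{a,b}): codings of points whose full two-sided orbit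
   (f_{a,b} being a bijection, given by a bi-infinite orbit sequence)
   stays in the union of the interiors int Omega_i *)
Definition piXab (m : nat) (a b : R) (w : Z -> nat) : Prop :=
  exists p : Z -> R * R * R,
    (forall n : Z, p (n + 1)%Z = fab m a b (p n)) /\
    (forall n : Z, intOmega m a (w n) (p n)).

(* closure in the product (of discrete) topology: cylinder approximation *)
Definition closure_one (S : (nat -> nat) -> Prop) (w : nat -> nat) : Prop :=
  forall N : nat, exists s, S s /\ forall n : nat, (n <= N)%nat -> s n = w n.

Definition closure_two (S : (Z -> nat) -> Prop) (w : Z -> nat) : Prop :=
  forall N : nat, exists s, S s /\
    forall n : Z, (Z.abs n <= Z.of_nat N)%Z -> s n = w n.

Definition SigmaHCplus (m : nat) (a : R) : (nat -> nat) -> Prop :=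
  closure_one (piXa m a).

Definition SigmaHC (m : nat) (a b : R) : (Z -> nat) -> Prop :=
  closure_two (piXab m a b).

(* A two-sided f_{a,b}-orbit projects, from any time -k on, to a forward f_a-orbit
   with the same coding; this gives one inclusion.  Conversely, a forward f_a-orbit
   realising a long block of w can be lifted to f_{a,b} by putting z at the fixed
   point zfix of the contraction z |-> b z + 1 - m b used on Omega_{m+1}, and then
   continued backwards forever inside int Omega_{m+1} by the inverse branch of f_{a,b}
   there.  Shifting the resulting coding by k approximates w on any window. *)

From Stdlib Require Import Reals ZArith Arith Lra Lia.
Open Scope R_scope.

Lemma Rmult_lt_1_of_lt_inv (n b : R) : 0 < n -> b < 1 / n -> n * b < 1.
Proof.
  intros Hn Hb. apply (Rmult_lt_compat_l n) in Hb; [|exact Hn].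
  replace (n * (1 / n)) with 1 in Hb by (field; lra). exact Hb.
Qed.

Lemma orbit_iter {X : Type} (f : X -> X) (p : Z -> X) :
  (forall n, p (n + 1)%Z = f (p n)) ->
  forall j (n : nat), p (j + Z.of_nat n)%Z = Nat.iter n f (p j).
Proof.
  intros Hp j n; induction n as [|n IH].
  - now rewrite Z.add_0_r.
  - rewrite Nat.iter_succ, <- IH, <- Hp. f_equal. lia.
Qed.

Definition glued_orbit {X : Type} (f g : X -> X) (x0 : X) (n : Z) : X :=
  if (n <? 0)%Z then Nat.iter (Z.to_nat (- n)) g x0 else Nat.iter (Z.to_nat n) f x0.

Lemma glued_orbit_step {X : Type} (f g : X -> X) (D : X -> Prop) (x0 : X) :
  (forall x, D x -> D (g x)) -> (forall x, D x -> f (g x) = x) -> D x0 ->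
  forall n, glued_orbit f g x0 (n + 1) = f (glued_orbit f g x0 n).
Proof.
  intros HgD Hfg Hx0 n. unfold glued_orbit.
  destruct (Z.ltb_spec (n + 1) 0), (Z.ltb_spec n 0); try lia.
  - replace (Z.to_nat (- n)) with (S (Z.to_nat (- (n + 1)))) by lia.
    rewrite Nat.iter_succ, Hfg; [reflexivity|]. now apply Nat.iter_invariant.
  - replace n with (-1)%Z by lia. symmetry. now apply Hfg.
  - now replace (Z.to_nat (n + 1)) with (S (Z.to_nat n)) by lia.
Qed.

Lemma fst_iter_fab m a b n q :
  fst (Nat.iter n (fab m a b) q) = Nat.iter n (fa m a) (fst q).
Proof.
  induction n as [|n IH]; [reflexivity|].
  rewrite !Nat.iter_succ, <- IH. now destruct (Nat.iter n (fab m a b) q) as [[x y] z].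
Qed.

Lemma intOmega_iff m a i q :
  intOmega m a i q <-> intOmegaPlus m a i (fst q) /\ 0 < snd q < 1.
Proof. now destruct q as [[x y] z]. Qed.

Lemma intOmega_index_range m a i q : intOmega m a i q -> (1 <= i <= 2 * m)%nat.
Proof.
  destruct q as [[x y] z]; unfold intOmega, intOmegaPlus.
  destruct (Nat.leb_spec i m); intros [[Hi _] _]; lia.
Qed.

Lemma piXab_shift m a b w k : piXab m a b w -> piXab m a b (fun n => w (n + k)%Z).
Proof.
  intros [p [Hp Hw]]. exists (fun n => p (n + k)%Z). split; [|intros n; apply Hw].
  intros n. rewrite <- Hp. f_equal. lia.
Qed.

Lemma piXab_piXa_future m a b w k :
  piXab m a b w -> piXa m a (fun n : nat => w (Z.of_nat n - k)%Z).
Proof.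
  intros [p [Hp Hw]]. exists (fst (p (- k)%Z)). intros n.
  rewrite <- fst_iter_fab with (b := b), <- (orbit_iter _ _ Hp).
  replace (- k + Z.of_nat n)%Z with (Z.of_nat n - k)%Z by lia.
  apply intOmega_iff, Hw.
Qed.

Lemma SigmaHC_index_range m a b w :
  SigmaHC m a b w -> forall n, (1 <= w n <= 2 * m)%nat.
Proof.
  intros HS n. destruct (HS (Z.to_nat (Z.abs n))) as [s [[p [_ Hs]] Hsw]].
  rewrite <- (Hsw n) by lia. exact (intOmega_index_range _ _ _ _ (Hs n)).
Qed.

Lemma SigmaHC_SigmaHCplus_future m a b w k :
  SigmaHC m a b w -> SigmaHCplus m a (fun n : nat => w (Z.of_nat n - k)%Z).
Proof.
  intros HS N. destruct (HS (N + Z.to_nat (Z.abs k))%nat) as [s [Hs Hsw]].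
  exists (fun n : nat => s (Z.of_nat n - k)%Z). split.
  - exact (piXab_piXa_future _ _ _ _ _ Hs).
  - intros n Hn. apply Hsw. lia.
Qed.

Definition zfix (m : nat) (b : R) : R := (1 - INR m * b) / (1 - b).

(* Inverse of f_{a,b} on int Omega_{m+1}, restricted to the invariant plane z = zfix. *)
Definition back_branch (m : nat) (a : R) (q : R * R * R) : R * R * R :=
  let '(x, y, z) := q in (INR m * a + (1 - INR m * a) * x, y / INR m, z).

Definition back_domain (m : nat) (b : R) (q : R * R * R) : Prop :=
  let '(x, y, z) := q in 0 < x < 1 /\ 0 < y < 1 /\ z = zfix m b.

Definition past_extension (m : nat) (t : nat -> nat) (n : Z) : nat :=
  if (n <? 0)%Z then S m else t (Z.to_nat n).

Section NaturalExtension.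

Variables (m : nat) (a b : R).
Hypothesis Hm : (2 <= m)%nat.
Hypothesis Ha : 0 < a < 1 / INR m.
Hypothesis Hb : 0 < b < 1 / INR m.

Lemma INR_m_ge2 : 2 <= INR m.
Proof. apply (le_INR 2), Hm. Qed.

Lemma ma_lt1 : INR m * a < 1.
Proof. apply Rmult_lt_1_of_lt_inv, Ha. pose proof INR_m_ge2; lra. Qed.

Lemma mb_lt1 : INR m * b < 1.
Proof. apply Rmult_lt_1_of_lt_inv, Hb. pose proof INR_m_ge2; lra. Qed.

Lemma zfix_unit : 0 < zfix m b < 1.
Proof.
  pose proof INR_m_ge2; pose proof mb_lt1.
  assert (b < INR m * b) by nra. unfold zfix.
  split; [apply Rdiv_lt_0_compat; lra|].
  apply Rmult_lt_reg_r with (1 - b); [lra|]. unfold Rdiv. rewrite Rmult_assoc, Rinv_l; lra.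
Qed.

Lemma intOmegaPlus_unit_square i x y :
  intOmegaPlus m a i (x, y) -> 0 < x < 1 /\ 0 < y < 1.
Proof.
  pose proof INR_m_ge2; pose proof ma_lt1. unfold intOmegaPlus.
  destruct (Nat.leb_spec i m) as [Him|Him]; intros [Hi [Hx Hy]].
  - apply le_INR in Hi, Him. simpl in Hi. split; [split|]; nra.
  - assert (Hlo : 0 <= (INR i - INR m - 1) / INR m).
    { apply Rle_mult_inv_pos; [|lra].
      assert (HSm : INR (S m) <= INR i) by (apply le_INR; lia). rewrite S_INR in HSm. lra. }
    assert (Hhi : (INR i - INR m) / INR m <= 1).
    { apply Rmult_le_reg_r with (INR m); [lra|]. unfold Rdiv.
      rewrite Rmult_assoc, Rinv_l, Rmult_1_r, Rmult_1_l by lra.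
      apply le_INR in Hi. rewrite mult_INR in Hi. simpl in Hi. lra. }
    split; [split; nra | lra].
Qed.

Lemma idx_le (x y : R) : (idx m a x y <= 2 * m)%nat.
Proof.
  unfold idx, floorR. destruct (Rlt_dec x (INR m * a)) as [Hx|]; [|lia].
  assert (Hxa : x / a < INR m).
  { apply Rmult_lt_reg_r with a; [apply Ha|]. unfold Rdiv.
    rewrite Rmult_assoc, Rinv_l; lra. }
  destruct (base_Int_part (x / a)) as [Hfl _].
  assert (Hlt : (Int_part (x / a) < Z.of_nat m)%Z).
  { apply lt_IZR. rewrite <- INR_IZR_INZ. lra. }
  lia.
Qed.

Lemma snd_fab_unit q : 0 < snd q < 1 -> 0 < snd (fab m a b q) < 1.
Proof.
  destruct q as [[x y] z]; simpl snd; intros Hz.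
  pose proof INR_m_ge2; pose proof mb_lt1.
  pose proof (idx_le x y) as Hi. unfold fab.
  destruct (Nat.leb_spec (idx m a x y) m) as [Him|Him]; [split; nra|].
  assert (HSm : INR (S m) <= INR (idx m a x y)) by (apply le_INR; lia).
  apply le_INR in Hi. rewrite mult_INR in Hi. rewrite S_INR in HSm. simpl in Hi. set (i := INR (idx m a x y)) in *.
  assert (0 <= b * (i - INR m - 1) <= b * (INR m - 1)) by (split; nra).
  split; nra.
Qed.

Lemma back_branch_domain q : back_domain m b q -> back_domain m b (back_branch m a q).
Proof.
  destruct q as [[x y] z]; intros [Hx [Hy Hz]].
  pose proof INR_m_ge2; pose proof ma_lt1.
  split; [split; nra|]. split; [|exact Hz].
  split; [apply Rdiv_lt_0_compat; lra|].
  apply Rmult_lt_reg_r with (INR m); [lra|]. unfold Rdiv. rewrite Rmult_assoc, Rinv_l; lra.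
Qed.

Lemma idx_back_branch x y : 0 < x < 1 -> 0 < y < 1 ->
  idx m a (INR m * a + (1 - INR m * a) * x) (y / INR m) = S m.
Proof.
  intros Hx Hy. pose proof INR_m_ge2; pose proof ma_lt1.
  unfold idx. destruct (Rlt_dec _ _); [nra|].
  replace (INR m * (y / INR m)) with y by (field; lra).
  unfold floorR, Int_part. rewrite <- (tech_up y 1) by (simpl; lra). simpl. lia.
Qed.

Lemma fab_back_branch q : back_domain m b q -> fab m a b (back_branch m a q) = q.
Proof.
  destruct q as [[x y] z]; intros [Hx [Hy ->]].
  pose proof INR_m_ge2; pose proof ma_lt1; pose proof mb_lt1.
  unfold back_branch, fab, fa. rewrite idx_back_branch by assumption.
  destruct (Nat.leb_spec (S m) m); [lia|].
  unfold Fa. destruct (Rlt_dec _ _); [nra|].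
  assert (b < 1) by nra. rewrite S_INR. unfold zfix. f_equal; [f_equal|]; field; lra.
Qed.

Lemma back_branch_intOmega q : back_domain m b q -> intOmega m a (S m) (back_branch m a q).
Proof.
  destruct q as [[x y] z]; intros [Hx [Hy ->]].
  pose proof INR_m_ge2; pose proof ma_lt1.
  split; [|exact zfix_unit].
  unfold intOmegaPlus. destruct (Nat.leb_spec (S m) m); [lia|]. rewrite S_INR.
  replace ((INR m + 1 - INR m - 1) / INR m) with 0 by (field; lra).
  replace ((INR m + 1 - INR m) / INR m) with (1 / INR m) by (field; lra).
  split; [lia|]. split; [split; nra|].
  split; [apply Rdiv_lt_0_compat; lra|].
  unfold Rdiv. apply Rmult_lt_compat_r; [apply Rinv_0_lt_compat|]; lra.
Qed.

Lemma piXab_past_extension t : piXa m a t -> piXab m a b (past_extension m t).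
Proof.
  intros [[x0 y0] Ht]. set (q0 := (x0, y0, zfix m b)).
  assert (Hq0 : back_domain m b q0).
  { destruct (intOmegaPlus_unit_square _ _ _ (Ht O)) as [Hx Hy]. now split; [|split]. }
  exists (glued_orbit (fab m a b) (back_branch m a) q0). split.
  { apply glued_orbit_step with (D := back_domain m b);
      auto using back_branch_domain, fab_back_branch. }
  intros n. unfold past_extension, glued_orbit. destruct (Z.ltb_spec n 0).
  - replace (Z.to_nat (- n)) with (S (Z.to_nat (- n - 1))) by lia.
    rewrite Nat.iter_succ. apply back_branch_intOmega, Nat.iter_invariant; auto.
    exact back_branch_domain.
  - apply intOmega_iff. split.
    + rewrite fst_iter_fab. apply Ht.
    + apply Nat.iter_invariant with (Inv := fun q => 0 < snd q < 1);
        [exact snd_fab_unit | exact zfix_unit].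
Qed.

Lemma SigmaHC_of_SigmaHCplus_pasts w :
  (forall k, (1 <= k)%Z -> SigmaHCplus m a (fun n : nat => w (Z.of_nat n - k)%Z)) ->
  SigmaHC m a b w.
Proof.
  intros Hpast N. set (k := (Z.of_nat N + 1)%Z).
  destruct (Hpast k ltac:(lia) (2 * N + 1)%nat) as [t [Ht Htw]].
  exists (fun n => past_extension m t (n + k)). split.
  - apply piXab_shift, piXab_past_extension, Ht.
  - intros n Hn. unfold past_extension. destruct (Z.ltb_spec (n + k) 0); [lia|].
    rewrite Htw by lia. f_equal. lia.
Qed.

End NaturalExtension.

Theorem proposition2p2 (m : nat) (a b : R) :
  (2 <= m)%nat -> 0 < a < 1 / INR m -> 0 < b < 1 / INR m ->
  forall w : Z -> nat,
    SigmaHC m a b w <->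
    ((forall n : Z, (1 <= w n <= 2 * m)%nat) /\
     forall k : Z, (1 <= k)%Z ->
       SigmaHCplus m a (fun n : nat => w (Z.of_nat n - k)%Z)).
Proof.
  intros Hm Ha Hb w. split.
  - intros HS. split.
    + exact (SigmaHC_index_range _ _ _ _ HS).
    + intros k _. exact (SigmaHC_SigmaHCplus_future _ _ _ _ _ HS).
  - intros [_ Hpast]. exact (SigmaHC_of_SigmaHCplus_pasts _ _ _ Hm Ha Hb _ Hpast).
Qed.
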